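(* Let $n\ge 1$ and let $x:\mathbb{N}\to\mathbb{R}$ satisfy $x(t+n)=a_1x(t+n-1)+\dots+a_nx(t)$ for all $t\in\mathbb{N}$, with $a_1,\dots,a_n\in\mathbb{R}$. Assume that $x$ satisfies no linear difference equation of order strictly less than $n$, i.e. there is no integer $m<n$ and no $c_1,\dots,c_m\in\mathbb{R}$ with $x(t+m)=c_1x(t+m-1)+\dots+c_mx(t)$ for all $t\in\mathbb{N}$. Let $X\in\mathbb{R}(z)$ be the rational function whose expansion at infinity is $\sum_{t\ge0}x(t)z^{-(t+1)}$, let $Q(z)=z^n-a_1z^{n-1}-\dots-a_n$, and let $P=QX$, which is a polynomial $P(z)=b_0z^{n-1}+b_1z^{n-2}+\dots+b_{n-1}$ with $b_0,\dots,b_{n-1}\in\mathbb{R}$. Then the parameters $a_1,\dots,a_n,b_0,\dots,b_{n-1}$ are linearly identifiable: the $(2n+1)\times(2n+1)$ Wronskian matrix $\mathcal{M}$ whose $\chi$-th row ($0\le\chi\le 2n$) is $$\Big(\tfrac{d^\chi}{dz^\chi}(z^nX),\ \tfrac{d^\chi}{dz^\chi}(z^{n-1}X),\ \dots,\ \tfrac{d^\chi}{dz^\chi}X,\ \tfrac{d^\chi}{dz^\chi}z^{n-1},\ \dots,\ \tfrac{d^\chi}{dz^\chi}z,\ \tfrac{d^\chi}{dz^\chi}1\Big)$$ has rank $2n$, and $(\alpha_1,\dots,\alpha_n,\beta_0,\dots,\beta_{n-1})=(a_1,\dots,a_n,b_0,\dots,b_{n-1})$ is the unique solution in $\mathbb{R}(z)^{2n}$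 of the linear system $$\frac{d^\chi}{dz^\chi}(z^nX)=\sum_{i=1}^n\alpha_i\frac{d^\chi}{dz^\chi}(z^{n-i}X)+\sum_{j=0}^{n-1}\beta_j\frac{d^\chi}{dz^\chi}z^{n-1-j},\qquad \chi=0,1,\dots,2n.$$
   Context: $\mathbb{R}(z)$ is the field of real rational functions, viewed as a differential field with derivation $d/dz$ (its field of constants is $\mathbb{R}$). The rational function $X$ exists because $x$ satisfies a linear recurrence. *)

From HB Require Import structures.
From mathcomp Require Import all_boot all_order all_algebra.
Set Implicit Arguments. Unset Strict Implicit. Unset Printing Implicit Defensive.
Import Order.TTheory GRing.Theory Num.Theory.
Local Open Scope ring_scope.

(* The field R(z) of real rational functions, over an abstract real field R
   (the statement is stated for every R : realFieldType; in particular for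
   the reals). *)
Notation ratfun R := {fraction {poly R}}.

Definition polyF (R : realFieldType) (p : {poly R}) : ratfun R :=
  @FracField.tofrac _ p.

Definition zF (R : realFieldType) : ratfun R := polyF 'X.

Definition derivF (R : realFieldType) (f : ratfun R) : ratfun R :=
  let r := repr f in
  polyF ((\n_r)^`() * \d_r - \n_r * (\d_r)^`()) / polyF (\d_r ^+ 2).

Definition derivFn (R : realFieldType) (k : nat) (f : ratfun R) : ratfun R :=
  iter k (@derivF R) f.

(* f has expansion sum_{t>=0} c(t) z^{-(t+1)} at infinity: for every N,
   f - sum_{t<N} c(t) z^{-(t+1)} = p/q with deg p - deg q <= -(N+1). *)
Definition expansion_at_infty (R : realFieldType) (f : ratfun R) (c : nat -> R) :=
  forall N : nat, exists p q : {poly R},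
    [/\ q != 0,
        f - \sum_(t < N) polyF (c t)%:P / zF R ^+ t.+1 = polyF p / polyF q
      & (size p + N < size q)%N].

Definition lin_rec (R : realFieldType) (m : nat) (c : 'I_m -> R) (x : nat -> R) :=
  forall t : nat, x (t + m)%N = \sum_(i < m) c i * x (t + m - 1 - i)%N.

(* Q(z) = z^n - a_1 z^{n-1} - ... - a_n   (a i stands for a_{i+1}) *)
Definition Qpoly (R : realFieldType) (n : nat) (a : 'I_n -> R) : {poly R} :=
  'X^n - \sum_(i < n) a i *: 'X^(n - 1 - i).

Definition Ppoly (R : realFieldType) (n : nat) (b : 'I_n -> R) : {poly R} :=
  \sum_(j < n) b j *: 'X^(n - 1 - j).

Definition wcol (R : realFieldType) (n : nat) (X : ratfun R) (k : nat) : ratfun R :=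
  if (k <= n)%N then zF R ^+ (n - k) * X else zF R ^+ (2 * n - k).

Definition wronskian (R : realFieldType) (n : nat) (X : ratfun R)
  : 'M[ratfun R]_((2 * n).+1) :=
  \matrix_(chi < (2 * n).+1, k < (2 * n).+1) derivFn chi (wcol n X k).

(* The 2n columns z^(n-1-i) X and z^(n-1-j) of the Wronskian are linearly
   independent over the constants R: a relation u X + v = 0 with polynomials
   u, v of degree < n would make u X a polynomial, and comparing coefficients
   at infinity turns u into a linear recurrence of order < n for x. By the
   Wronskian criterion (normalise a coefficient of a relation between the
   derivatives, differentiate, and induct on the number of functions) these
   columns stay independent over R(z) already on the rows chi < 2n. Since
   Q X = P makes the column z^n X the combination with coefficients a and b,
   the rank is exactly 2n and (a, b) is the only solution of the system. *)

From HB Require Import structures.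
From mathcomp Require Import all_boot all_order all_algebra.
From mathcomp Require Import ring zify.
Import Order.TTheory GRing.Theory Num.Theory.
Local Open Scope ring_scope.
Local Open Scope quotient_scope.

HB.instance Definition _ (R : realFieldType) :=
  GRing.RMorphism.copy (@polyF R) (@FracField.tofrac _).

Section PolyDerivative.
Variable R : numFieldType.

Lemma deriv_eq0_polyC {p : {poly R}} : p^`() = 0 -> p = (p`_0)%:P.
Proof.
move=> p'0; apply/polyP => -[|i]; rewrite coefC //=.
have /eqP := congr1 (fun q : {poly R} => q`_i) p'0.
by rewrite coef_deriv coef0 mulrn_eq0 /= => /eqP.
Qed.

Lemma deriv_cross_scale {p q : {poly R}} : q != 0 -> p^`() * q = p * q^`() ->
  exists c : R, p = c *: q.
Proof.
move=> q0 pq.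
set g := gcdp p q.
have g0 : g != 0 by rewrite gcdp_eq0 negb_and q0 orbT.
have cop := coprimep_div_gcd (p:=p) (q:=q) (introT orP (or_intror q0)).
set p1 := p %/ g in cop; set q1 := q %/ g in cop.
have Ep : p = p1 * g by rewrite divpK // dvdp_gcdl.
have Eq : q = q1 * g by rewrite divpK // dvdp_gcdr.
have q10 : q1 != 0 by apply: contraNneq q0 => h; rewrite Eq h mul0r.
have pq1 : p1^`() * q1 = p1 * q1^`().
  have : g ^+ 2 * (p1^`() * q1 - p1 * q1^`()) = 0.
    rewrite -[RHS](subrr (p * q^`())) -{1}pq Ep Eq !derivM; ring.
  by move/eqP; rewrite mulf_eq0 expf_eq0 (negbTE g0) andbF subr_eq0 => /eqP.
have q1'0 : q1^`() = 0.
  apply/eqP; apply: contraT => q1'_neq0.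
  have : q1 %| q1^`() by rewrite -(Gauss_dvdpr _ (etrans (coprimep_sym _ _) cop)) -pq1 dvdp_mull.
  by move/(dvdp_leq q1'_neq0); rewrite leqNgt lt_size_deriv.
have p1'0 : p1^`() = 0.
  by move/eqP: pq1; rewrite q1'0 mulr0 mulf_eq0 (negbTE q10) orbF => /eqP.
have c0 : q1`_0 != 0 by apply: contraNneq q10 => h; rewrite (deriv_eq0_polyC q1'0) h.
exists (p1`_0 / q1`_0); rewrite Ep Eq scalerAl; congr (_ * _).
rewrite [in LHS](deriv_eq0_polyC p1'0) [in RHS](deriv_eq0_polyC q1'0) coefC /=.
by rewrite scale_polyC mulfVK.
Qed.
End PolyDerivative.
Arguments deriv_cross_scale {R p q}.

Section Derivation.
Variable R : realFieldType.
Local Notation F := (ratfun R).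

Lemma polyF_eq0 (p : {poly R}) : (polyF p == 0) = (p == 0).
Proof. exact: tofrac_eq0. Qed.

Lemma polyF_inj : injective (@polyF R).
Proof. by move=> p q /eqP; rewrite tofrac_eq => /eqP. Qed.

Lemma polyF_repr (f : F) : f = polyF \n_(repr f) / polyF \d_(repr f).
Proof.
have pi_ratio (r : {ratio {poly R}}) : \pi_F r * polyF \d_r = polyF \n_r.
  have dr0 := denom_ratioP r; rewrite /polyF !piE; apply/eqmodP.
  rewrite /= FracField.equivfE /FracField.mulf !numden_Ratio ?mulf_neq0 ?oner_eq0 //.
  by rewrite !mulr1 mulrC.
have := pi_ratio (repr f); rewrite reprK => <-.
by rewrite mulfK // polyF_eq0 denom_ratioP.
Qed.

Lemma ratfun_quotient (f : F) : exists p q, q != 0 /\ f = polyF p / polyF q.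
Proof. by exists \n_(repr f), \d_(repr f); rewrite -polyF_repr denom_ratioP. Qed.

Lemma derivF_frac (p q : {poly R}) : q != 0 ->
  derivF (polyF p / polyF q) = polyF (p^`() * q - p * q^`()) / polyF (q ^+ 2).
Proof.
move=> q0; rewrite /derivF.
set f := polyF p / polyF q; have E := polyF_repr f.
set n := \n_(repr f) in E *; set d := \d_(repr f) in E *.
have d0 : d != 0 by exact: denom_ratioP.
have E1 : p * d = n * q.
  apply: polyF_inj; apply/eqP; rewrite !rmorphM -eqr_div ?polyF_eq0 //.
  by rewrite -E.
have E2 : p^`() * d + p * d^`() = n^`() * q + n * q^`() by rewrite -!derivM E1.
apply/eqP; rewrite eqr_div ?polyF_eq0 ?expf_neq0 // -!rmorphM; apply/eqP; congr polyF.
apply/subr0_eq.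
transitivity ((d^`() * q + q^`() * d) * (p * d - n * q)
  + d * q * (n^`() * q + n * q^`() - (p^`() * d + p * d^`()))); first by ring.
by rewrite E1 E2 !subrr !mulr0 addr0.
Qed.

Lemma polyF_divD (p1 q1 p2 q2 : {poly R}) : q1 != 0 -> q2 != 0 ->
  polyF p1 / polyF q1 + polyF p2 / polyF q2
  = polyF (p1 * q2 + p2 * q1) / polyF (q1 * q2).
Proof. by move=> q10 q20; rewrite addf_div ?polyF_eq0 // -!rmorphM -rmorphD. Qed.

Lemma polyF_divM (p1 q1 p2 q2 : {poly R}) :
  polyF p1 / polyF q1 * (polyF p2 / polyF q2) = polyF (p1 * p2) / polyF (q1 * q2).
Proof. by rewrite mulf_div -!rmorphM. Qed.

Lemma polyF_div_eq (p q r s : {poly R}) : q != 0 -> s != 0 -> p * s = r * q ->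
  polyF p / polyF q = polyF r / polyF s.
Proof. by move=> q0 s0 E; apply/eqP; rewrite eqr_div ?polyF_eq0 // -!rmorphM E. Qed.

Lemma derivF_add (f g : F) : derivF (f + g) = derivF f + derivF g.
Proof.
have [p1 [q1 [q10 ->]]] := ratfun_quotient f.
have [p2 [q2 [q20 ->]]] := ratfun_quotient g.
have sq0 q : q != 0 -> q ^+ 2 != 0 := expf_neq0 2.
rewrite polyF_divD // !derivF_frac ?mulf_neq0 // polyF_divD ?sq0 //.
by apply: polyF_div_eq; rewrite ?mulf_neq0 ?sq0 // !(derivD, derivM); ring.
Qed.

Lemma derivF_mul (f g : F) : derivF (f * g) = derivF f * g + f * derivF g.
Proof.
have [p1 [q1 [q10 ->]]] := ratfun_quotient f.
have [p2 [q2 [q20 ->]]] := ratfun_quotient g.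
have sq0 q : q != 0 -> q ^+ 2 != 0 := expf_neq0 2.
rewrite polyF_divM !derivF_frac ?mulf_neq0 // !polyF_divM polyF_divD ?mulf_neq0 ?sq0 //.
by apply: polyF_div_eq; rewrite ?mulf_neq0 ?sq0 // !(derivD, derivM); ring.
Qed.

Lemma derivF_const (c : R) : derivF (polyF c%:P) = 0.
Proof.
rewrite -[polyF c%:P]divr1 -(rmorph1 (@polyF R)) derivF_frac ?oner_eq0 //.
by rewrite derivC -polyC1 derivC !(mul0r, mulr0, subr0, rmorph0).
Qed.

Lemma derivF0 : derivF (0 : F) = 0.
Proof. by rewrite -(rmorph0 (@polyF R)) -polyC0 derivF_const. Qed.

Lemma derivF1 : derivF (1 : F) = 0.
Proof. by rewrite -(rmorph1 (@polyF R)) -polyC1 derivF_const. Qed.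

Lemma derivF_constM (c : R) (f : F) : derivF (polyF c%:P * f) = polyF c%:P * derivF f.
Proof. by rewrite derivF_mul derivF_const mul0r add0r. Qed.

Lemma derivF_sum m (f : 'I_m -> F) : derivF (\sum_(k < m) f k) = \sum_(k < m) derivF (f k).
Proof. exact: (big_morph _ derivF_add derivF0). Qed.

Lemma derivFnS k (f : F) : derivFn k.+1 f = derivF (derivFn k f).
Proof. by []. Qed.

Lemma derivFn0 k : derivFn k (0 : F) = 0.
Proof. by elim: k => // k IH; rewrite derivFnS IH derivF0. Qed.

Lemma derivFn_add k (f g : F) : derivFn k (f + g) = derivFn k f + derivFn k g.
Proof. by elim: k => // k IH; rewrite !derivFnS IH derivF_add. Qed.

Lemma derivFn_sum k m (f : 'I_m -> F) :
  derivFn k (\sum_(i < m) f i) = \sum_(i < m) derivFn k (f i).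
Proof. exact: (big_morph _ (derivFn_add k) (derivFn0 k)). Qed.

Lemma derivFn_constM k (c : R) (f : F) :
  derivFn k (polyF c%:P * f) = polyF c%:P * derivFn k f.
Proof. by elim: k => // k IH; rewrite !derivFnS IH derivF_constM. Qed.

(* The value of [f] when [f] is constant; meaningless otherwise. *)
Definition const_of (f : F) : R := lead_coef \n_(repr f) / lead_coef \d_(repr f).

Lemma derivF_eq0 (f : F) : derivF f = 0 -> f = polyF (const_of f)%:P.
Proof.
rewrite /const_of; move: (denom_ratioP (repr f)) (polyF_repr f).
set p := \n_(repr f); set q := \d_(repr f) => q0 fE.
rewrite {1}fE derivF_frac // => /eqP; rewrite mulf_eq0 invr_eq0 !polyF_eq0 expf_eq0.
rewrite (negbTE q0) andbF orbF subr_eq0 => /eqP /(deriv_cross_scale q0) [c pE].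
rewrite fE pE lead_coefZ mulfK ?lead_coef_eq0 // -mul_polyC rmorphM mulfK //.
by rewrite polyF_eq0.
Qed.

Definition const_free m (g : nat -> F) :=
  forall r : nat -> R,
    \sum_(k < m) polyF (r k)%:P * g k = 0 -> forall k, (k < m)%N -> r k = 0.

Lemma const_freeS {m g} : const_free m.+1 g -> const_free m g.
Proof.
move=> gfree r sum0 k km.
have := gfree (fun i => if (i < m)%N then r i else 0) _ k (ltnW km); rewrite km; apply.
rewrite big_ord_recr /= ltnn polyC0 rmorph0 mul0r addr0 -[RHS]sum0.
by apply: eq_bigr => i _; rewrite ltn_ord.
Qed.

Lemma wronskian_free m (g c : nat -> F) : const_free m g ->
  (forall chi, (chi < m)%N -> \sum_(k < m) c k * derivFn chi (g k) = 0) ->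
  forall k, (k < m)%N -> c k = 0.
Proof.
elim: m c => [|m IH] c gfree sys k // km.
have gfree' := const_freeS gfree.
have [cm0 | cm_neq0] := eqVneq (c m) 0.
  have sys' chi : (chi < m)%N -> \sum_(k < m) c k * derivFn chi (g k) = 0.
    by move=> lt; have := sys chi (ltnW lt); rewrite big_ord_recr /= cm0 mul0r addr0.
  by move: km; rewrite ltnS leq_eqVlt => /predU1P[-> | /(IH c gfree' sys')].
(* Divide by [c m] and differentiate: the derivatives of the normalised
   coefficients solve the system for [m] functions, so they vanish and the
   normalised coefficients are constants, which [const_free] forbids. *)
exfalso.
pose d k := c k / c m.
have dsys chi : (chi < m.+1)%N -> \sum_(k < m.+1) d k * derivFn chi (g k) = 0.
  move=> lt; rewrite -[RHS](mul0r (c m)^-1) -[in RHS](sys chi lt) mulr_suml.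
  by apply: eq_bigr => i _; rewrite mulrAC.
have d'sys chi : (chi < m)%N -> \sum_(k < m) derivF (d k) * derivFn chi (g k) = 0.
  move=> lt; have := congr1 (@derivF R) (dsys chi (ltnW lt)).
  rewrite derivF0 derivF_sum; under eq_bigr do rewrite derivF_mul.
  rewrite big_split /= [X in _ + X](dsys chi.+1 lt) addr0 big_ord_recr /=.
  by rewrite /d divff // derivF1 mul0r addr0.
have d_const := IH (fun k => derivF (d k)) gfree' d'sys.
pose r k := if (k < m)%N then const_of (d k) else 1.
have sum0 : \sum_(k < m.+1) polyF (r k)%:P * g k = 0.
  rewrite -[RHS](dsys 0%N isT) !big_ord_recr /= /r ltnn polyC1 rmorph1 mul1r /d divff // mul1r.
  congr (_ + _); apply: eq_bigr => i _; rewrite ltn_ord.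
  by rewrite -derivF_eq0 ?d_const.
by have := gfree r sum0 m (ltnSn m); rewrite /r ltnn => /eqP; rewrite oner_eq0.
Qed.
End Derivation.
Arguments const_free {R}.
Arguments wronskian_free {R m g c}.

Section Expansion.
Variable R : realFieldType.
Local Notation F := (ratfun R).
Local Notation z := (zF R).

Lemma zF_exp k : z ^+ k = polyF 'X^k.
Proof. by rewrite /zF rmorphXn. Qed.

Lemma polyF_Ppoly n (b : 'I_n -> R) :
  polyF (Ppoly b) = \sum_(j < n) polyF (b j)%:P * z ^+ (n - 1 - j).
Proof. by rewrite rmorph_sum; apply: eq_bigr => j _; rewrite -mul_polyC rmorphM zF_exp. Qed.

Lemma polyF_Qpoly n (a : 'I_n -> R) :
  polyF (Qpoly a) = z ^+ n - \sum_(i < n) polyF (a i)%:P * z ^+ (n - 1 - i).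
Proof. by rewrite rmorphB zF_exp -polyF_Ppoly. Qed.

Lemma size_Ppoly n (b : 'I_n -> R) : (size (Ppoly b) <= n)%N.
Proof.
rewrite /Ppoly; elim/big_ind: _ => [|p q|i _]; first by rewrite size_poly0.
  by move=> sp sq; rewrite (leq_trans (size_polyD p q)) // geq_max sp sq.
by rewrite (leq_trans (size_scale_leq _ _)) // size_polyXn; have := ltn_ord i; lia.
Qed.

Lemma coef_Ppoly n (b : 'I_n -> R) (i : 'I_n) : (Ppoly b)`_(n - 1 - i) = b i.
Proof.
rewrite coef_sum (bigD1 i) //= coefZ coefXn eqxx mulr1 big1 ?addr0 // => j ji.
rewrite coefZ coefXn; case: eqP => [eq_ji|]; last by rewrite mulr0.
by case/eqP: ji; apply: val_inj; move: eq_ji (ltn_ord i) (ltn_ord j) => /=; lia.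
Qed.

Lemma partial_sum_mulXn N (x : nat -> R) :
  (\sum_(t < N) polyF (x t)%:P / z ^+ t.+1) * z ^+ N
  = polyF (Ppoly (fun t : 'I_N => x t)).
Proof.
have z0 : z != 0 by rewrite /zF polyF_eq0 polyX_eq0.
rewrite polyF_Ppoly mulr_suml; apply: eq_bigr => t _.
have -> : z ^+ N = z ^+ (N - 1 - t) * z ^+ t.+1.
  by rewrite -exprD; congr (_ ^+ _); have := ltn_ord t; lia.
by rewrite mulrA mulrAC divfK ?expf_neq0.
Qed.

Lemma size_quot_le (A q v p : {poly R}) k : q != 0 -> A * q = v * p ->
  (size v + size p <= size q + k)%N -> (size A <= k)%N.
Proof.
move=> q0 Aq_vp le_vpq; have [->|A0] := eqVneq A 0; first by rewrite size_poly0.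
have [p0|p0] := eqVneq p 0.
  by move/eqP: Aq_vp; rewrite p0 mulr0 mulf_eq0 (negbTE A0) (negbTE q0).
have sA : (0 < size A)%N by rewrite size_poly_gt0.
have sq : (0 < size q)%N by rewrite size_poly_gt0.
have := size_polyMleq v p; rewrite -Aq_vp size_mul // -!subn1.
(* [size_mul] reaches [size] through the integral-domain structure of [R],
   which [lia] does not identify with the [size] in the hypotheses. *)
by move: le_vpq sA sq; move: (size A) (size q) (size v) (size p) => a b c d; lia.
Qed.

Lemma annihilator_recurrence (X : F) (x : nat -> R) (u w : {poly R}) :
  expansion_at_infty X x -> u != 0 -> polyF u * X = polyF w ->
  forall t, \sum_(j < size u) u`_j * x (t + j)%N = 0.
Proof.
(* [A] is z^N u (X - S_N), which by the tail estimate has size at most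
   deg u; its coefficient of degree deg u is minus the recurrence at [t]. *)
move=> expX u0 uXw t.
set m := (size u).-1; have su : size u = m.+1 by rewrite prednK ?size_poly_gt0.
pose N := (t + m).+1.
have [p [q [q0 tailE size_pq]]] := expX N.
pose s := Ppoly (fun t' : 'I_N => x t').
pose A := w * 'X^N - u * s.
have AqE : A * q = u * 'X^N * p.
  apply: polyF_inj; rewrite /A !rmorphM rmorphB !rmorphM /=.
  have pE : polyF p = (X - \sum_(t' < N) polyF (x t')%:P / z ^+ t'.+1) * polyF q.
    by rewrite tailE divfK ?polyF_eq0.
  rewrite -uXw -zF_exp /s -partial_sum_mulXn pE.
  set S := \sum_(_ < N) _; ring.
have sizeA : (size A <= m)%N.
  by apply: size_quot_le q0 AqE _; rewrite size_mulXn //; lia.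
have /eqP := nth_default 0 sizeA.
rewrite coefB coefMXn ifT ?sub0r ?coefM ?oppr_eq0; last by rewrite /N; lia.
move/eqP => us_m0; rewrite -[RHS]us_m0 su; apply: eq_bigr => j _; congr (_ * _).
have tjN : (t + j < N)%N by rewrite /N; have := ltn_ord j; lia.
have -> : (m - j = N - 1 - Ordinal tjN)%N by rewrite /N /=; have := ltn_ord j; lia.
by rewrite (coef_Ppoly _ _ (Ordinal tjN)).
Qed.

Lemma annihilator_size n (X : F) (x : nat -> R) (u w : {poly R}) :
  expansion_at_infty X x ->
  (forall (m : nat) (c : 'I_m -> R), (m < n)%N -> ~ lin_rec c x) ->
  u != 0 -> polyF u * X = polyF w -> (n < size u)%N.
Proof.
move=> expX minimal u0 uXw; rewrite ltnNge; apply/negP => size_u.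
set m := (size u).-1; have su : size u = m.+1 by rewrite prednK ?size_poly_gt0.
have um0 : u`_m != 0 by rewrite -lead_coefE lead_coef_eq0.
apply: (minimal m (fun i => - u`_(m - 1 - i) / u`_m)); first by lia.
move=> t; have := annihilator_recurrence _ _ _ _ expX u0 uXw t.
rewrite su big_ord_recr /= => /eqP; rewrite addr_eq0 => /eqP rec.
rewrite (reindex_inj rev_ord_inj) /=.
have -> : \sum_(i < m) - u`_(m - 1 - (m - i.+1)) / u`_m * x (t + m - 1 - (m - i.+1))%N
    = - (\sum_(i < m) u`_i * x (t + i)%N) / u`_m.
  rewrite mulNr mulr_suml -sumrN; apply: eq_bigr => i _.
  have -> : (m - 1 - (m - i.+1) = i)%N by have := ltn_ord i; lia.
  have -> : (t + m - 1 - (m - i.+1) = t + i)%N by have := ltn_ord i; lia.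
  by rewrite !mulNr mulrAC.
by rewrite rec opprK mulrC mulKf.
Qed.

End Expansion.
Arguments annihilator_size {R n X x u w}.
Arguments coef_Ppoly {R n}.

Section RankByColumns.
Variables (K : fieldType) (m : nat) (M : 'M[K]_m.+1).

Lemma mxrank_le_col0_comb (c : 'I_m -> K) :
  (forall i, M i ord0 = \sum_k c k * M i (lift ord0 k)) -> (\rank M <= m)%N.
Proof.
move=> col0E.
pose v : 'rV_m.+1 := \row_k oapp c (-1) (unlift ord0 k).
have vM : v *m M^T = 0.
  apply/rowP => i; rewrite !mxE big_ord_recl !mxE unlift_none /= col0E mulN1r.
  by under eq_bigr do rewrite !mxE liftK /=; rewrite addNr.
have v0 : v != 0.
  by apply/eqP => /rowP/(_ ord0); rewrite !mxE unlift_none => /eqP; rewrite oppr_eq0 oner_eq0.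
have := mxrankS (_ : (v <= kermx M^T)%MS); rewrite sub_kermx vM eqxx => /(_ isT).
by rewrite rank_rV v0 mxrank_ker mxrank_tr; have := rank_leq_col M; lia.
Qed.

Lemma mxrank_ge_cols_free :
  (forall c : 'I_m -> K, (forall i, \sum_k c k * M i (lift ord0 k) = 0) -> forall k, c k = 0) ->
  (m <= \rank M)%N.
Proof.
move=> free; pose C : 'M_(m, m.+1) := rowsub (lift ord0) M^T.
have kerC : kermx C = 0.
  apply/matrixP => i k; rewrite [RHS]mxE; apply: (free (fun k => kermx C i k)) => j.
  have wC : row i (kermx C) *m C = 0 by rewrite -row_mul mulmx_ker row0.
  have := congr1 (fun A : 'rV_m.+1 => A ord0 j) wC; rewrite mxE [RHS]mxE => wCj.
  rewrite -[RHS]wCj.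
  by apply: eq_bigr => k' _; rewrite !mxE.
have rkC : \rank C = m.
  by have := mxrank_ker C; rewrite kerC mxrank0; have := rank_leq_row C; lia.
by rewrite -mxrank_tr -{1}rkC mxrankS ?rowsub_sub.
Qed.
End RankByColumns.
Arguments mxrank_le_col0_comb {K m M}.
Arguments mxrank_ge_cols_free {K m M}.

Definition zero_ext {V : nmodType} {n} (u : 'I_n -> V) (k : nat) : V := oapp u 0 (insub k).

Lemma zero_ext_ord (V : nmodType) n (u : 'I_n -> V) (i : 'I_n) : zero_ext u i = u i.
Proof. by rewrite /zero_ext valK. Qed.

Section WronskianSystem.
Variables (R : realFieldType) (n : nat) (X : ratfun R).
Local Notation F := (ratfun R).
Local Notation z := (zF R).

Definition cat_coef (u v : 'I_n -> F) (k : nat) : F :=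
  if (k < n)%N then zero_ext u k else zero_ext v (k - n).

Lemma cat_coef_l (u v : 'I_n -> F) (i : 'I_n) : cat_coef u v i = u i.
Proof. by rewrite /cat_coef ltn_ord zero_ext_ord. Qed.

Lemma cat_coef_r (u v : 'I_n -> F) (i : 'I_n) : cat_coef u v (n + i) = v i.
Proof. by rewrite /cat_coef ltnNge leq_addr /= addKn zero_ext_ord. Qed.

Lemma wronskian_col0 chi : wronskian n X chi ord0 = derivFn chi (z ^+ n * X).
Proof. by rewrite mxE /wcol /= subn0. Qed.

Lemma wronskian_lift chi k : wronskian n X chi (lift ord0 k) = derivFn chi (wcol n X k.+1).
Proof. by rewrite mxE. Qed.

Lemma sum_wcol (c : nat -> F) chi :
  \sum_(k < 2 * n) c k * derivFn chi (wcol n X k.+1)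
  = \sum_(i < n) c i * derivFn chi (z ^+ (n - 1 - i) * X)
  + \sum_(i < n) c (n + i)%N * derivFn chi (z ^+ (n - 1 - i)).
Proof.
rewrite mul2n -addnn big_split_ord /=; congr (_ + _); apply: eq_bigr => i _; rewrite /wcol.
  by rewrite ltn_ord -subnDA.
have -> : ((n + i).+1 <= n)%N = false by lia.
by have -> : (2 * n - (n + i).+1 = n - 1 - i)%N by lia.
Qed.

Lemma sum_wcol_cat_coef (u v : 'I_n -> F) chi :
  \sum_(k < 2 * n) cat_coef u v k * derivFn chi (wcol n X k.+1)
  = \sum_(i < n) u i * derivFn chi (z ^+ (n - 1 - i) * X)
  + \sum_(j < n) v j * derivFn chi (z ^+ (n - 1 - j)).
Proof.
by rewrite sum_wcol; congr (_ + _); apply: eq_bigr => i _; rewrite ?cat_coef_l ?cat_coef_r.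
Qed.

Lemma wcol_free (x : nat -> R) :
  expansion_at_infty X x ->
  (forall (m : nat) (c : 'I_m -> R), (m < n)%N -> ~ lin_rec c x) ->
  const_free (2 * n) (fun k => wcol n X k.+1).
Proof.
move=> expX minimal r sum0.
pose u := Ppoly (fun i : 'I_n => r i); pose v := Ppoly (fun i : 'I_n => r (n + i)%N).
have uXv : polyF u * X + polyF v = 0.
  rewrite -[RHS]sum0 [RHS](sum_wcol (fun k => polyF (r k)%:P) 0) !polyF_Ppoly mulr_suml.
  by congr (_ + _); apply: eq_bigr => i _; rewrite -mulrA.
have u0 : u = 0.
  apply/eqP; apply: contraT => u_neq0.
  have uXw : polyF u * X = polyF (- v) by apply/eqP; rewrite rmorphN -addr_eq0 uXv.
  by have := annihilator_size expX minimal u_neq0 uXw; rewrite ltnNge size_Ppoly.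
have v0 : v = 0.
  by apply: polyF_inj; move: uXv; rewrite u0 rmorph0 mul0r add0r.
move=> k k2n; have [kn | nk] := ltnP k n.
  by rewrite -(coef_Ppoly (fun i : 'I_n => r i) (Ordinal kn)) -/u u0 coef0.
have kn' : (k - n < n)%N by lia.
rewrite -(subnKC nk) -(coef_Ppoly (fun i : 'I_n => r (n + i)%N) (Ordinal kn')).
by rewrite -/v v0 coef0.
Qed.

Lemma wronskian_system (a b : 'I_n -> R) :
  polyF (Qpoly a) * X = polyF (Ppoly b) -> forall chi,
  derivFn chi (z ^+ n * X) =
    \sum_(i < n) polyF (a i)%:P * derivFn chi (z ^+ (n - 1 - i) * X)
  + \sum_(j < n) polyF (b j)%:P * derivFn chi (z ^+ (n - 1 - j)).
Proof.
move=> QXP chi.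
have -> : z ^+ n * X
    = \sum_(i < n) polyF (a i)%:P * (z ^+ (n - 1 - i) * X) + polyF (Ppoly b).
  rewrite -QXP polyF_Qpoly mulrBl mulr_suml addrC.
  by under [S in _ - S]eq_bigr do rewrite -mulrA; rewrite subrK.
rewrite derivFn_add polyF_Ppoly !derivFn_sum.
by congr (_ + _); apply: eq_bigr => i _; rewrite derivFn_constM.
Qed.

Lemma wronskian_cols_free : const_free (2 * n) (fun k => wcol n X k.+1) ->
  forall c : 'I_(2 * n) -> F,
  (forall chi, \sum_k c k * wronskian n X chi (lift ord0 k) = 0) -> forall k, c k = 0.
Proof.
move=> free c csys k; rewrite -zero_ext_ord.
apply: (wronskian_free free _ _ (ltn_ord k)) => chi lt.
rewrite -[RHS](csys (inord chi)); apply: eq_bigr => j _.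
by rewrite zero_ext_ord wronskian_lift inordK // ltnW.
Qed.

Lemma wronskian_system_inj (u v u' v' : 'I_n -> F) :
  const_free (2 * n) (fun k => wcol n X k.+1) ->
  (forall chi, (chi < 2 * n)%N ->
     \sum_(i < n) u i * derivFn chi (z ^+ (n - 1 - i) * X)
     + \sum_(j < n) v j * derivFn chi (z ^+ (n - 1 - j))
   = \sum_(i < n) u' i * derivFn chi (z ^+ (n - 1 - i) * X)
     + \sum_(j < n) v' j * derivFn chi (z ^+ (n - 1 - j))) ->
  forall i, u i = u' i /\ v i = v' i.
Proof.
move=> free sys.
have diff0 : forall k, (k < 2 * n)%N -> cat_coef u v k - cat_coef u' v' k = 0.
  apply: (@wronskian_free _ _ _ (fun k => cat_coef u v k - cat_coef u' v' k) free) => chi lt.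
  under eq_bigr do rewrite mulrBl.
  by rewrite sumrB !sum_wcol_cat_coef sys // subrr.
move=> i; split; apply/eqP; rewrite -subr_eq0.
  by rewrite -(cat_coef_l u v i) -(cat_coef_l u' v' i) diff0 //; have := ltn_ord i; lia.
by rewrite -(cat_coef_r u v i) -(cat_coef_r u' v' i) diff0 //; have := ltn_ord i; lia.
Qed.

End WronskianSystem.
Arguments cat_coef {R n}.
Arguments wcol_free {R n X x}.
Arguments wronskian_system {R n X a b}.
Arguments wronskian_cols_free {R n X}.
Arguments wronskian_system_inj {R n X u v u' v'}.

Theorem theorem1 (R : realFieldType) (n : nat) (x : nat -> R)
    (a b : 'I_n -> R) (X : ratfun R) :
  (1 <= n)%N ->
  lin_rec a x ->
  (forall (m : nat) (c : 'I_m -> R), (m < n)%N -> ~ lin_rec c x) ->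
  expansion_at_infty X x ->
  polyF (Qpoly a) * X = polyF (Ppoly b) ->
  \rank (wronskian n X) = (2 * n)%N /\
  (forall alpha beta : 'I_n -> ratfun R,
     (forall chi : nat, (chi <= 2 * n)%N ->
        derivFn chi (zF R ^+ n * X) =
          \sum_(i < n) alpha i * derivFn chi (zF R ^+ (n - 1 - i) * X)
        + \sum_(j < n) beta j * derivFn chi (zF R ^+ (n - 1 - j)))
     <-> (forall i : 'I_n, alpha i = polyF (a i)%:P /\ beta i = polyF (b i)%:P)).
Proof.
move=> _ _ minimal expX QXP.
have free := wcol_free expX minimal.
have sys := wronskian_system QXP.
split.
  apply/eqP; rewrite eqn_leq mxrank_ge_cols_free ?andbT; last exact: wronskian_cols_free free.
  apply: (mxrank_le_col0_comb (cat_coef (fun i => polyF (a i)%:P) (fun j => polyF (b j)%:P))).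
  move=> chi; rewrite wronskian_col0 sys -sum_wcol_cat_coef.
  by apply: eq_bigr => k _; rewrite wronskian_lift.
move=> alpha beta; split=> [alpha_beta_sys | ab_eq chi _].
  apply: wronskian_system_inj free _ => chi lt.
  by rewrite -alpha_beta_sys ?(ltnW lt) ?sys.
rewrite sys; congr (_ + _); apply: eq_bigr => i _.
  by rewrite (proj1 (ab_eq i)).
by rewrite (proj2 (ab_eq i)).
Qed.
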